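(* Given an example pair $(x,y)\in\mathcal{X}\times\{\pm1\}$ and a function $\hat h:\mathcal{X}\to\mathbb{R}$, there exists $p^*\in\{0,1\}$ such that $p^*(\hat h(x)y-1)\le\hat y\,y-1$, where $\hat y=\mathbb{E}[\Pi(\hat h(x))]$, the expectation taken only with respect to the randomness of $\Pi$.
   Context: Randomized projection: for $z\in\mathbb{R}$, $\Pi(z)$ is the random label equal to $\mathrm{sign}(z)$ if $|z|\ge1$; otherwise $\Pi(z)=+1$ with probability $\frac{1+z}{2}$ and $-1$ with probability $\frac{1-z}{2}$. *)

From Stdlib Require Import Reals.
Open Scope R_scope.

Definition label_val (b : bool) : R := if b then 1 else -1.

(* sign of a real (only used for |z| >= 1, where z <> 0). *)
Definition sgn (z : R) : R := if Rlt_dec 0 z then 1 else if Rlt_dec z 0 then -1 else 0.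

(* Distribution of the randomized projection Pi(z) on {+1,-1}:
   probability that Pi(z) takes label b. *)
Definition Pi_prob (z : R) (b : bool) : R :=
  if Rle_dec 1 (Rabs z) then
    (if Req_EM_T (label_val b) (sgn z) then 1 else 0)
  else (if b then (1 + z) / 2 else (1 - z) / 2).

Definition Pi_expect (z : R) : R :=
  Pi_prob z true * label_val true + Pi_prob z false * label_val false.

From Stdlib Require Import Reals Lra.
Open Scope R_scope.

(* The expected label E[Pi(z)] is z clipped to [-1, 1]; multiplying by y = ±1
   cannot push it below min(1, z y), and min(0, a) is always realized as p a
   with p in {0, 1}. *)

Definition clip (z : R) : R := Rmax (-1) (Rmin 1 z).

Lemma Pi_expect_clip (z : R) : Pi_expect z = clip z.
Proof.
  unfold Pi_expect, Pi_prob, label_val, sgn, clip, Rmax, Rmin.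
  destruct (Rle_dec 1 (Rabs z)) as [Hge | Hlt].
  - destruct (Rlt_dec 0 z) as [Hpos | Hnpos].
    + rewrite Rabs_right in Hge by lra.
      destruct (Req_EM_T 1 1); [|congruence].
      destruct (Req_EM_T (-1) 1); [lra|].
      repeat destruct Rle_dec; lra.
    + destruct (Rlt_dec z 0) as [Hneg | Hnneg].
      * rewrite Rabs_left in Hge by lra.
        destruct (Req_EM_T 1 (-1)); [lra|].
        destruct (Req_EM_T (-1) (-1)); [|congruence].
        repeat destruct Rle_dec; lra.
      * replace z with 0 in Hge by lra.
        rewrite Rabs_R0 in Hge; lra.
  - apply Rnot_le_lt, Rabs_def2 in Hlt.
    repeat destruct Rle_dec; lra.
Qed.

Lemma Rmin_1_le_clip_mul_sign (z y : R) :
  y = 1 \/ y = -1 -> Rmin 1 (z * y) <= clip z * y.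
Proof.
  unfold clip, Rmax, Rmin.
  intros [-> | ->]; repeat destruct Rle_dec; lra.
Qed.

Lemma Rmin_0_indicator (a : R) :
  exists p : R, (p = 0 \/ p = 1) /\ p * a = Rmin 0 a.
Proof.
  unfold Rmin; destruct (Rle_dec 0 a).
  - exists 0; split; [left | ring]; reflexivity.
  - exists 1; split; [right | ring]; reflexivity.
Qed.

Theorem lemma5 (X : Type) (x : X) (y : R) (hy : y = 1 \/ y = -1) (h : X -> R) :
  exists p : R, (p = 0 \/ p = 1) /\
    p * (h x * y - 1) <= Pi_expect (h x) * y - 1.
Proof.
  destruct (Rmin_0_indicator (h x * y - 1)) as [p [Hp Hpa]].
  exists p; split; [exact Hp|].
  rewrite Hpa, Pi_expect_clip.
  assert (Hmin := Rmin_1_le_clip_mul_sign (h x) y hy).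
  unfold Rmin in *; repeat destruct Rle_dec; lra.
Qed.
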